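(* Let $f\in A[X]$ be monic with discriminant $\Delta=\mathrm{Res}_X(f,f')\neq 0$, $r=v(\Delta)$, and let $N>2r$ be an integer. Let $f_N\in(A/\pi^NA)[X]$ be the reduction of $f$ modulo $\pi^N$ and $S_N\subseteq A/\pi^NA$ its set of roots. Then every root of $f$ in $K$ lies in $A$, and the map $x\mapsto[\overline{x}]$ (where $\overline{x}$ is the reduction of $x$ modulo $\pi^NA$ and $[\cdot]$ the $\approx$-class) is a bijection from the set of roots of $f$ in $K$ onto $S_N/\approx$. In particular, the number of roots of $f$ in $K$ equals $|S_N/\approx|$.
   Context: $K$ is a field complete with respect to a non-archimedean discrete valuation $v$, normalized by $v(\pi)=1$ for a uniformizer $\pi$ of the valuation ring $A=\{x\in K: v(x)\geq 0\}$; the residue field $A/\pi A$ is finite. The equivalence relation $\approx$ on $S_N$ is: $x\approx y$ iff either $N\leq r$ and $x=y$, or $N>r$ and $x\equiv y \pmod{\overline{\pi}^{\,r+1}}$, where $\overline{\pi}$ is the image of $\pi$ in $A/\pi^NA$. *)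

From HB Require Import structures.
From mathcomp Require Import all_boot all_order all_algebra.
Set Implicit Arguments. Unset Strict Implicit. Unset Printing Implicit Defensive.
Import Order.TTheory GRing.Theory Num.Theory.
Local Open Scope ring_scope.

(* A (normalized, discrete) valuation on a field K is encoded by a function
   v : K -> int whose value at 0 is irrelevant (v 0 "= +oo").                *)

Definition vge (K : fieldType) (v : K -> int) (x : K) (n : int) : bool :=
  (x == 0) || (n <= v x).

Definition inA (K : fieldType) (v : K -> int) (x : K) : bool := vge v x 0.

Definition congA (K : fieldType) (v : K -> int) (n : int) (x y : K) : bool :=
  vge v (x - y) n.

Definition discrete_valuation (K : fieldType) (v : K -> int) (pi : K) : Prop :=
  [/\ forall x y : K, x != 0 -> y != 0 -> v (x * y) = v x + v y,
      forall x y : K, x != 0 -> y != 0 -> x + y != 0 ->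
        Num.min (v x) (v y) <= v (x + y),
      pi != 0 & v pi = 1].

Definition val_cauchy (K : fieldType) (v : K -> int) (u : nat -> K) : Prop :=
  forall n : int, exists M : nat, forall i j : nat, (M <= i)%N -> (M <= j)%N ->
    vge v (u i - u j) n.

Definition val_converges (K : fieldType) (v : K -> int) (u : nat -> K) (l : K) : Prop :=
  forall n : int, exists M : nat, forall i : nat, (M <= i)%N -> vge v (u i - l) n.

Definition val_complete (K : fieldType) (v : K -> int) : Prop :=
  forall u : nat -> K, val_cauchy v u -> exists l : K, val_converges v u l.

Definition finite_residue (K : fieldType) (v : K -> int) : Prop :=
  exists s : seq K, all (inA v) s /\
    forall a : K, inA v a -> exists2 b, b \in s & congA v 1 a b.

(* Elements of A / pi^N A are represented by elements of A (equality in the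
   quotient being congA v N). *)
Definition approx (K : fieldType) (v : K -> int) (N : nat) (r : int) (x y : K) : bool :=
  if N%:Z <= r then congA v N%:Z x y else congA v (r + 1) x y.

Definition in_SN (K : fieldType) (v : K -> int) (N : nat) (f : {poly K}) (x : K) : bool :=
  inA v x && vge v f.[x] N%:Z.

(* Since f is monic with integral coefficients its roots are integral, and the
   discriminant is an integral combination D = u f + w f'.  Hence at an integral
   a with v(f a) > r = v D we get v(f' a) <= r.  A root a of f modulo pi^N with
   N > 2r therefore satisfies v(f a) > 2 v(f' a), and Newton's iteration started
   at a converges to a root x with v(x - a) >= N - v(f' a) > r.  Conversely, two
   roots x <> y with v(x - y) > r are impossible: writing f = q (X - y) gives
   f'(x) = q'(x) (x - y), of valuation > r.  So the roots of f form a
   transversal of S_N modulo ~. *)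

From HB Require Import structures.
From mathcomp Require Import all_boot all_order all_algebra.
From mathcomp Require Import zify ring.
From Stdlib Require Import Classical.
Set Implicit Arguments. Unset Strict Implicit. Unset Printing Implicit Defensive.
Import Order.TTheory GRing.Theory Num.Theory.
Local Open Scope ring_scope.

Section ResultantOver.
Variables (R : comNzRingType) (S : subringClosed R).

Lemma rpred_det n (A : 'M[R]_n) : A \is a mxOver S -> \det A \in S.
Proof.
move=> /mxOverP AS; rewrite rpred_sum // => s _.
by rewrite rpredM ?rpred_sign ?rpred_prod.
Qed.

Lemma mxOver_adj n (A : 'M[R]_n) : A \is a mxOver S -> \adj A \is a mxOver S.
Proof.
move=> /mxOverP AS; apply/mxOverP => i j.
rewrite mxE rpredM ?rpred_sign ?rpred_det //.
by apply/mxOverP => k l; rewrite !mxE.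
Qed.

Lemma Sylvester_mxOver (p q : {poly R}) :
  p \is a polyOver S -> q \is a polyOver S -> Sylvester_mx p q \is a mxOver S.
Proof.
move=> /polyOverP pS /polyOverP qS; apply/mxOverP => i j.
by rewrite Sylvester_mxE; case: (split i) => k; rewrite rpredMn.
Qed.

Lemma rpred_resultant (p q : {poly R}) :
  p \is a polyOver S -> q \is a polyOver S -> resultant p q \in S.
Proof. by move=> pS qS; apply/rpred_det/Sylvester_mxOver. Qed.

(* The Bezout identity of [resultant_in_ideal], with cofactors over [S]; the
   cofactors are read off a row of the adjugate of the Sylvester matrix. *)
Lemma resultant_in_ideal_over (p q : {poly R}) :
    (0 < (size q).-1 + (size p).-1)%N ->
    p \is a polyOver S -> q \is a polyOver S ->
  exists u w : {poly R}, [/\ u \is a polyOver S, w \is a polyOver S &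
    (resultant p q)%:P = u * p + w * q].
Proof.
move=> dS_gt0 pS qS; set j0 := Ordinal dS_gt0.
pose c := row j0 (\adj (Sylvester_mx p q)).
have /mxOverP cS : c \is a mxOver S.
  by apply/mxOverP => i j; rewrite mxE (mxOverP (mxOver_adj (Sylvester_mxOver pS qS))).
have : c *m Sylvester_mx p q = row j0 (resultant p q)%:M.
  by rewrite -row_mul mul_adj_mx.
clearbody c => Ec.
exists (rVpoly (lsubmx c)), (rVpoly (rsubmx c)); split;
  try by apply/polyOverP => i; rewrite coef_rVpoly; case: insub => [k|];
    rewrite ?mxE ?cS ?rpred0.
move: Ec; rewrite -[c]hsubmxK /Sylvester_mx mul_row_col !mul_rV_lin1 /= hsubmxK.
rewrite -linearD /= => /(congr1 rVpoly); rewrite poly_rV_K; last first.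
  have szl : (size (rVpoly (lsubmx c)) <= (size q).-1)%N := size_poly _ _.
  have szr : (size (rVpoly (rsubmx c)) <= (size p).-1)%N := size_poly _ _.
  apply: leq_trans (size_add _ _) _; rewrite geq_max.
  have le_pred a b d : (a <= d.-1 -> (a + b).-1 <= d.-1 + b.-1)%N.
    by rewrite -!subn1; lia.
  rewrite !(leq_trans (size_polyMleq _ _)) //; [rewrite [leqRHS]addnC|]; exact: le_pred.
by move=> ->; rewrite -scalemx1 !linearZ /= row1 rVpoly_delta alg_polyC.
Qed.
End ResultantOver.

Section PolyOverFactor.
Variables (R : comNzRingType) (S : subringClosed R).

Lemma polyOver_factor_XsubC (p : {poly R}) a : p \is a polyOver S -> a \in S ->
  exists2 q, q \is a polyOver S & p = q * ('X - a%:P) + p.[a]%:P.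
Proof.
move=> + aS; elim/poly_ind: p => [_|p c IH /polyOverP pcS].
  by exists 0; rewrite ?rpred0 // mul0r horner0 add0r.
have pS : p \is a polyOver S.
  by apply/polyOverP => i; have := pcS i.+1; rewrite coefD coefMX coefC addr0.
have [q qS Ep] := IH pS.
exists (q * 'X + p.[a]%:P).
  by rewrite rpredD ?rpredM ?polyOverX ?polyOverC ?rpred_horner.
by rewrite hornerMXaddC {1}Ep polyCD polyCM; ring.
Qed.

Lemma polyOver_hornerB (p : {poly R}) x y : p \is a polyOver S -> x \in S -> y \in S ->
  exists2 z, z \in S & p.[x] - p.[y] = (x - y) * z.
Proof.
move=> pS xS yS; have [q qS Ep] := polyOver_factor_XsubC pS yS.
by exists q.[x]; [rewrite rpred_horner | rewrite {1}Ep !hornerE; ring].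
Qed.

Lemma polyOver_horner_taylor2 (p : {poly R}) a t :
    p \is a polyOver S -> a \in S -> t \in S ->
  exists2 h, h \in S & p.[a + t] = p.[a] + t * p^`().[a] + t ^+ 2 * h.
Proof.
move=> pS aS tS; have [q qS Ep] := polyOver_factor_XsubC pS aS.
have [q1 q1S Eq] := polyOver_factor_XsubC qS aS.
exists q1.[a + t]; first by rewrite rpred_horner ?rpredD.
have -> : p^`() = q^`() * ('X - a%:P) + q.
  by rewrite {1}Ep derivD derivC addr0 derivM derivXsubC mulr1.
rewrite {1}Ep {1}Eq !hornerE subrr mulr0 add0r; ring.
Qed.

End PolyOverFactor.

Lemma poly_roots_seq (F : fieldType) (p : {poly F}) : p != 0 ->
  exists s, uniq s /\ forall x, root p x = (x \in s).
Proof.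
have [n] := ubnP (size p); elim: n p => // n IH p sz_p p0.
case: (classic (exists x, root p x)) => [[x px0] | no_root]; last first.
  by exists [::]; split => // y; apply/negP => py0; apply: no_root; exists y.
have [q Ep] := factor_theorem _ _ px0.
have q0 : q != 0 by apply: contra_neq p0; rewrite Ep => ->; rewrite mul0r.
have [|s [_ qs]] := IH q _ q0.
  by move: sz_p; rewrite Ep size_mul ?polyXsubC_eq0 // size_XsubC addn2.
exists (undup (x :: s)); split; first exact: undup_uniq.
by move=> y; rewrite mem_undup in_cons Ep rootM root_XsubC qs orbC.
Qed.

Section Valuation.
Variables (K : fieldType) (v : K -> int) (pi : K).
Hypothesis hv : discrete_valuation v pi.

Lemma vM x y : x != 0 -> y != 0 -> v (x * y) = v x + v y.
Proof. by case: hv => + _ _ _; apply. Qed.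

Lemma vD x y : x != 0 -> y != 0 -> x + y != 0 -> Num.min (v x) (v y) <= v (x + y).
Proof. by case: hv => _ + _ _; apply. Qed.

Lemma v1 : v 1 = 0.
Proof. by have := vM (oner_neq0 K) (oner_neq0 K); rewrite mulr1; move: (v 1); lia. Qed.

Lemma vN x : v (- x) = v x.
Proof.
have N10 : (-1 : K) != 0 by rewrite oppr_eq0 oner_neq0.
have vN1 : v (-1) = 0 by have := vM N10 N10; rewrite mulrNN mulr1 v1; lia.
have [->|x0] := eqVneq x 0; first by rewrite oppr0.
by rewrite -mulN1r vM // vN1 add0r.
Qed.

Lemma vV x : x != 0 -> v x^-1 = - v x.
Proof. by move=> x0; have := vM x0 (invr_neq0 x0); rewrite divff // v1; lia. Qed.

Lemma vge0 n : vge v 0 n.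
Proof. by rewrite /vge eqxx. Qed.

Lemma vge_nz x n : x != 0 -> vge v x n = (n <= v x).
Proof. by rewrite /vge => /negbTE ->. Qed.

Lemma vge_v x : vge v x (v x).
Proof. by rewrite /vge lexx orbT. Qed.

Lemma vge_vS x : x != 0 -> vge v x (v x + 1) = false.
Proof. by move=> x0; rewrite vge_nz //; lia. Qed.

Lemma vge_le x m n : m <= n -> vge v x n -> vge v x m.
Proof. by rewrite /vge => mn /orP[->|/(le_trans mn)->]; rewrite ?orbT. Qed.

Lemma vgeN x n : vge v (- x) n = vge v x n.
Proof. by rewrite /vge oppr_eq0 vN. Qed.

Lemma vgeD x y n : vge v x n -> vge v y n -> vge v (x + y) n.
Proof.
have [->|x0] := eqVneq x 0; first by rewrite add0r.
have [->|y0] := eqVneq y 0; first by rewrite addr0.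
have [->|xy0] := eqVneq (x + y) 0; first by rewrite vge0.
rewrite !vge_nz // => nx ny; apply: le_trans (vD x0 y0 xy0).
by rewrite le_min nx ny.
Qed.

Lemma vgeB x y n : vge v x n -> vge v y n -> vge v (x - y) n.
Proof. by move=> hx hy; rewrite vgeD ?vgeN. Qed.

Lemma vgeM x y m n : vge v x m -> vge v y n -> vge v (x * y) (m + n).
Proof.
have [->|x0] := eqVneq x 0; first by rewrite mul0r !vge0.
have [->|y0] := eqVneq y 0; first by rewrite mulr0 !vge0.
by rewrite !vge_nz ?mulf_neq0 // vM //; apply: lerD.
Qed.

Lemma vgeD_eq x y : x != 0 -> vge v y (v x + 1) -> x + y != 0 /\ v (x + y) = v x.
Proof.
move=> x0 hy; have xy0 : x + y != 0.
  by apply: contra_eqN hy => /eqP xy0; rewrite -[y](addKr x) xy0 addr0 vgeN vge_vS.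
have ge_x : v x <= v (x + y).
  by rewrite -vge_nz // vgeD ?vge_v // (vge_le _ hy) // lerDl.
split => //; apply/eqP; rewrite eq_le ge_x andbT leNgt.
apply: contraFN (vge_vS x0) => lt_x.
have hxy : vge v (x + y) (v x + 1) by rewrite vge_nz //; lia.
by have := vgeB hxy hy; rewrite addrK.
Qed.

Lemma vge_vSN x n : ~~ vge v x (n + 1) -> x != 0 /\ v x <= n.
Proof.
have [->|x0] := eqVneq x 0; first by rewrite vge0.
by rewrite vge_nz // -ltNge ltzD1.
Qed.

Definition valring : {pred K} := inA v.

Lemma valring_subring_closed : subring_closed valring.
Proof.
split; first by rewrite unfold_in /inA vge_nz ?oner_neq0 // v1.
  by move=> x y; apply: vgeB.
by move=> x y xA yA; have := vgeM xA yA.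
Qed.

HB.instance Definition _ := GRing.isSubringClosed.Build K valring valring_subring_closed.

(* The subring instance of [valring] depends on [hv]; outside this section
   polyOver hypotheses are built through this lemma. *)
Lemma polyOver_valringP (p : {poly K}) :
  reflect (forall i, inA v p`_i) (p \is a polyOver valring).
Proof. exact: (@polyOverP _ valring p). Qed.

Lemma vgeMr x y n : vge v x n -> y \in valring -> vge v (x * y) n.
Proof. by move=> hx hy; have := vgeM hx hy; rewrite addr0. Qed.

Lemma vgeMl x y n : x \in valring -> vge v y n -> vge v (x * y) n.
Proof. by rewrite mulrC => xA /vgeMr ->. Qed.

Lemma valring_vge x n : 0 <= n -> vge v x n -> x \in valring.
Proof. exact: vge_le. Qed.

Lemma root_monic_valring (p : {poly K}) x :
  p \is a polyOver valring -> p \is monic -> root p x -> x \in valring.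
Proof.
move=> /polyOverP pA mon_p /rootP; apply: contraPT => xNA.
have x0 : x != 0 by apply: contraNneq xNA => ->; apply: rpred0.
have yA : x^-1 \in valring.
  move: xNA; rewrite !unfold_in /inA !vge_nz ?invr_eq0 // vV //; lia.
rewrite horner_coef; have := monicP mon_p; rewrite lead_coefE.
have : size p != 0%N by rewrite size_poly_eq0 monic_neq0.
case: (size p) => [|[|n]] // _ lead1 /=.
  by rewrite big_ord1 lead1 mul1r expr0; apply/eqP; rewrite oner_eq0.
rewrite big_ord_recr /= lead1 mul1r => sum0; apply: (negP xNA).
have -> : x = - \sum_(i < n.+1) p`_i * x^-1 ^+ (n - i).
  move: sum0 => /(congr1 ( *%R^~ (x^-1 ^+ n))).
  rewrite mul0r mulrDl exprS -mulrA -exprMn divff // expr1n mulr1 big_distrl /=.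
  move/eqP; rewrite addrC addr_eq0 => /eqP {1}->; congr (- _); apply: eq_bigr => i _.
  rewrite -mulrA; congr (_ * _).
  by rewrite -[RHS]mulr1 -(expr1n _ i) -(divff x0) exprMn mulrCA -exprD subnK ?leq_ord.
by rewrite rpredN rpred_sum // => i _; rewrite rpredM ?rpredX.
Qed.

Section Newton.
Variables (f : {poly K}) (a : K) (N : int).
Hypotheses (fA : f \is a polyOver valring) (aA : a \in valring)
  (f'a_neq0 : f^`().[a] != 0) (vf'a_lt : 2 * v f^`().[a] < N)
  (fa_small : vge v f.[a] N).
Local Notation e := (v f^`().[a]).

Let f'A : f^`() \is a polyOver valring.
Proof. by rewrite polyOver_deriv. Qed.

Definition newton_step b := b - f.[b] / f^`().[b].

Definition newton_inv (k : nat) b := [/\ b \in valring, f^`().[b] != 0,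
  v f^`().[b] = e, vge v (b - a) (N - e) & vge v f.[b] (N + k%:Z)].

Lemma vf'a_ge0 : 0 <= e.
Proof.
have : f^`().[a] \in valring by rewrite rpred_horner.
by rewrite unfold_in /inA vge_nz.
Qed.

Lemma newton_correction_small k b :
  newton_inv k b -> vge v (f.[b] / f^`().[b]) (N + k%:Z - e).
Proof.
case=> _ f'b0 vf'b _; have [->|fb0] := eqVneq f.[b] 0; first by rewrite mul0r !vge0.
rewrite !vge_nz ?mulf_neq0 ?invr_neq0 // vM ?invr_neq0 // vV // vf'b; lia.
Qed.

Lemma newton_inv_step k b : newton_inv k b -> newton_inv k.+1 (newton_step b).
Proof.
move=> inv_b; have t_small := newton_correction_small inv_b.
have e_ge0 := vf'a_ge0.
have [le0 le1 le2 le3] : [/\ 0 <= N + k%:Z - e, e + 1 <= N + k%:Z - e,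
  N - e <= N + k%:Z - e & N + k.+1%:Z <= N + k%:Z - e + (N + k%:Z - e)].
  by split; lia.
case: inv_b => bA f'b0 vf'b ba_small fb_small.
set t := f.[b] / f^`().[b] in t_small.
have tA : t \in valring by apply: valring_vge t_small.
have nbA : newton_step b \in valring by rewrite rpredB.
have ntA : - t \in valring by rewrite rpredN.
have [h hA Ef] := polyOver_horner_taylor2 fA bA ntA.
have [z zA Ef'] := polyOver_hornerB f'A nbA bA.
have tz_small : vge v (- t * z) (v f^`().[b] + 1).
  by rewrite vgeMr // vgeN vf'b (vge_le le1).
have [f'nb0 vf'nb] := vgeD_eq f'b0 tz_small.
have Ef'nb : f^`().[newton_step b] = f^`().[b] + - t * z.
  have nb_b : newton_step b - b = - t by rewrite /newton_step addrC addKr.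
  by rewrite -nb_b -Ef' addrC subrK.
split => //; rewrite ?Ef'nb ?vf'nb //.
  by rewrite /newton_step -/t addrAC vgeB // (vge_le le2).
have t_f'b : t * f^`().[b] = f.[b] by rewrite divfK.
rewrite /newton_step -/t Ef mulNr t_f'b addrN add0r sqrrN expr2 vgeMr //.
exact: vge_le le3 (vgeM t_small t_small).
Qed.

Definition newton_seq k := iter k newton_step a.

Lemma newton_seq_inv k : newton_inv k (newton_seq k).
Proof.
elim: k => [|k IH]; last exact: newton_inv_step.
by split; rewrite ?subrr ?vge0 ?addr0.
Qed.

Lemma newton_seq_tail M k :
  vge v (newton_seq (M + k) - newton_seq M) (N + M%:Z - e).
Proof.
elim: k => [|k IH]; first by rewrite addn0 subrr vge0.
have le_Mk : N + M%:Z - e <= N + (M + k)%N%:Z - e by lia.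
have step_small := vge_le le_Mk (newton_correction_small (newton_seq_inv (M + k))).
rewrite addnS -(subrK (newton_seq (M + k)) (newton_seq (M + k).+1)) -addrA vgeD //.
by rewrite /newton_seq iterS /newton_step addrC addKr vgeN.
Qed.

Lemma newton_seq_cauchy : val_cauchy v newton_seq.
Proof.
move=> n; exists `|n|%N => i j le_ni le_nj.
have tail l : (`|n| <= l)%N -> vge v (newton_seq l - newton_seq `|n|) n.
  move=> le_nl; rewrite -(subnKC le_nl); apply: vge_le (newton_seq_tail _ _).
  by have := vf'a_ge0; lia.
have -> : newton_seq i - newton_seq j =
    (newton_seq i - newton_seq `|n|) - (newton_seq j - newton_seq `|n|).
  by rewrite opprB addrA subrK.
by rewrite vgeB ?tail.
Qed.

Lemma newton_limit_root x :
  val_converges v newton_seq x -> root f x /\ vge v (x - a) (N - e).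
Proof.
move=> lim_x; have e_ge0 := vf'a_ge0.
have near_lim n : exists M, [/\ (`|n| <= M)%N, newton_inv M (newton_seq M)
    & vge v (newton_seq M - x) n].
  have [M0 hM0] := lim_x n; exists (maxn M0 `|n|).
  by split; rewrite ?leq_maxr ?hM0 ?leq_maxl //; apply: newton_seq_inv.
have xA : x \in valring.
  have [M [_ [sA _ _ _ _] close]] := near_lim 0.
  by rewrite -(subKr (newton_seq M) x) rpredB.
split; last first.
  have [M [_ [_ _ _ sa_small _] close]] := near_lim (N - e).
  have -> : x - a = (newton_seq M - a) - (newton_seq M - x) by ring.
  by rewrite vgeB.
apply/rootP/eqP/contraT => fx0.
have [M [le_M [sA _ _ _ fs_small] close]] := near_lim (v f.[x] + 1).
have [z zA Ez] := polyOver_hornerB fA sA xA.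
have fs_small' : vge v f.[newton_seq M] (v f.[x] + 1).
  by apply: vge_le fs_small; lia.
have diff_small : vge v (f.[newton_seq M] - f.[x]) (v f.[x] + 1).
  by rewrite Ez vgeMr.
have := vgeB fs_small' diff_small.
by rewrite opprB addrC subrK vge_vS.
Qed.

Theorem hensel : val_complete v -> exists2 x, root f x & vge v (x - a) (N - e).
Proof.
move=> complete; have [x /newton_limit_root[fx0 close]] := complete _ newton_seq_cauchy.
by exists x.
Qed.

End Newton.

Section Discriminant.
Variables (f : {poly K}).
Hypotheses (fA : f \is a polyOver valring) (mon_f : f \is monic)
  (disc_neq0 : resultant f f^`() != 0).
Local Notation D := (resultant f f^`()).

Lemma disc_valring : D \in valring.
Proof. by rewrite rpred_resultant ?polyOver_deriv. Qed.

Lemma vdisc_ge0 : 0 <= v D.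
Proof. by have := disc_valring; rewrite unfold_in /inA vge_nz. Qed.

(* With [D = u f + w f^`()] for integral [u] and [w], the values [f.[a]] and
   [f^`().[a]] cannot both lie in [pi^(v D + 1) A]. *)
Lemma vderiv_le_vdisc a : a \in valring -> vge v f.[a] (v D + 1) ->
  f^`().[a] != 0 /\ v f^`().[a] <= v D.
Proof.
move=> aA fa_small; apply: vge_vSN; apply/negP => f'a_small.
have [dS0|dS_gt0] := posnP ((size f^`()).-1 + (size f).-1).
  have sz_f : (size f <= 1)%N by move: dS0; rewrite -!subn1; lia.
  have fa1 : f.[a] = 1.
    rewrite (size1_polyC sz_f) hornerC -(monicP mon_f) lead_coefE.
    by case: (size f) sz_f => [|[|]].
  by move: fa_small; rewrite fa1 vge_nz ?oner_neq0 // v1; have := vdisc_ge0; lia.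
have f'A : f^`() \is a polyOver valring by rewrite polyOver_deriv.
have [u [w [uA wA Duw]]] := resultant_in_ideal_over dS_gt0 fA f'A.
have /negP[] : ~~ vge v D (v D + 1) by rewrite vge_vS.
have Da : D = u.[a] * f.[a] + w.[a] * f^`().[a].
  by rewrite -(hornerC D a) Duw !hornerE.
by rewrite {1}Da vgeD ?vgeMl ?rpred_horner.
Qed.

Lemma roots_eq_of_close x y :
  root f x -> root f y -> vge v (x - y) (v D + 1) -> x = y.
Proof.
move=> fx0 fy0 close; apply/eqP/contraT => neq_xy.
have xA := root_monic_valring fA mon_f fx0.
have [q qA Ef] := polyOver_factor_XsubC fA (root_monic_valring fA mon_f fy0).
rewrite (rootP fy0) addr0 in Ef.
have qx0 : q.[x] = 0.
  move: (rootP fx0); rewrite Ef hornerM hornerXsubC => /eqP.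
  by rewrite mulf_eq0 subr_eq0 (negbTE neq_xy) orbF => /eqP.
have f'x : f^`().[x] = q^`().[x] * (x - y).
  by rewrite Ef derivM derivXsubC mulr1 !hornerE qx0 addr0.
have fx_small : vge v f.[x] (v D + 1) by rewrite (rootP fx0) vge0.
have [f'x0 le_vD] := vderiv_le_vdisc xA fx_small.
have : vge v f^`().[x] (v D + 1) by rewrite f'x vgeMl ?rpred_horner ?polyOver_deriv.
by rewrite vge_nz //; move: le_vD; lia.
Qed.

Lemma root_near a (N : int) : val_complete v -> a \in valring ->
  2 * v D < N -> vge v f.[a] N -> exists2 x, root f x & vge v (x - a) (v D + 1).
Proof.
move=> complete aA lt_N fa_small; have vD_ge0 := vdisc_ge0.
have /(vderiv_le_vdisc aA)[f'a0 le_vD] : vge v f.[a] (v D + 1).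
  by apply: vge_le fa_small; lia.
have lt_N' : 2 * v f^`().[a] < N by lia.
have [x fx0 close] := hensel fA aA f'a0 lt_N' fa_small complete.
by exists x => //; apply: vge_le close; lia.
Qed.

End Discriminant.
End Valuation.


Theorem theorem3p9 (K : fieldType) (v : K -> int) (pi : K)
  (hv : discrete_valuation v pi) (hcomp : val_complete v)
  (hres : finite_residue v)
  (f : {poly K}) (hfA : forall i : nat, inA v f`_i) (hmon : f \is monic)
  (hD : resultant f f^`() != 0)
  (N : nat) (hN : 2 * v (resultant f f^`()) < N%:Z) :
  let r := v (resultant f f^`()) in
  [/\ (* every root of f in K lies in A *)
      forall x : K, root f x -> inA v x,
      (* the map x |-> [x mod pi^N] lands in S_N/~ *)
      forall x : K, root f x -> in_SN v N f x,
      (* injectivity *)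
      forall x y : K, root f x -> root f y -> approx v N r x y -> x = y,
      (* surjectivity *)
      forall a : K, in_SN v N f a -> exists2 x : K, root f x & approx v N r x a
    & (* counting: #roots of f in K = |S_N / ~| (via a transversal L) *)
      exists s : seq K, [/\ uniq s, (forall x, root f x = (x \in s)) &
        exists L : seq K, [/\ all (in_SN v N f) L,
          (forall i j : nat, (i < size L)%N -> (j < size L)%N ->
             approx v N r (nth 0 L i) (nth 0 L j) -> i = j),
          (forall a, in_SN v N f a -> exists2 b, b \in L & approx v N r a b) &
          size L = size s]]].
Proof.
move=> r; have fA := introT (polyOver_valringP hv f) hfA.
have r_ge0 : 0 <= r := vdisc_ge0 hv fA hD.
have approxE x y : approx v N r x y = vge v (x - y) (r + 1).
  by rewrite /approx ifF //; apply/negbTE; rewrite -ltNge; lia.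
have rootA x : root f x -> inA v x := root_monic_valring hv fA hmon.
have root_SN x : root f x -> in_SN v N f x.
  by move=> fx0; rewrite /in_SN rootA // (rootP fx0) vge0.
have inj x y : root f x -> root f y -> approx v N r x y -> x = y.
  by move=> fx0 fy0; rewrite approxE; apply: (roots_eq_of_close hv fA hmon hD).
have surj a : in_SN v N f a -> exists2 x, root f x & approx v N r x a.
  case/andP => aA fa_small.
  have [x fx0 close] := root_near hv fA hmon hD hcomp aA hN fa_small.
  by exists x; rewrite ?approxE.
have [s [s_uniq s_roots]] := poly_roots_seq (monic_neq0 hmon).
split => //; exists s; split => //; exists s; split => //.
- by apply/allP => x; rewrite -s_roots; apply: root_SN.
- move=> i j lt_i lt_j /inj eq_ij; apply/eqP; rewrite -(nth_uniq 0 lt_i lt_j s_uniq).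
  by apply/eqP/eq_ij; rewrite s_roots mem_nth.
- move=> a /surj[x fx0 close]; exists x; first by rewrite -s_roots.
  by move: close; rewrite !approxE -opprB (vgeN hv).
Qed.
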